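(* Let $V$ ($|V|>1$) index a discrete memoryless multiple source with entropy function $H$, and let $R_{\mathrm{CO}}$, $\hat f_{R_{\mathrm{CO}}}$, the fundamental partition $\mathcal{P}^*$ (with $|\mathcal{P}^*|\ge 2$), the core $\mathscr{R}^*_{\mathrm{CO}}(V)$ and the subgame cores $\mathscr{R}^*_{\mathrm{CO}}(C)$, $C\in\mathcal{P}^*$, be as in the context. Let $w_V\in\mathbb{R}_{>0}^{|V|}$, $K=|\mathcal{P}^*|-1$ and $\mathbb{Q}_K=\{z/K:z\in\mathbb{Z}\}$. Let $r^E_V$ be either (a) the egalitarian solution, i.e. the minimizer of $\min\{\sum_{i\in V}r_i^2/w_i: r_V\in\mathscr{R}^*_{\mathrm{CO}}(V)\}$, or (b) the fractional egalitarian solution, i.e. the minimizer of $\min\{\sum_{i\in V}r_i^2/w_i: r_V\in\mathscr{R}^*_{\mathrm{CO}}(V)\cap\mathbb{Q}_K^{|V|}\}$. Then $$r^E_V=\bigoplus_{C\in\mathcal{P}^*} r^E_C,$$ where, for each $C\in\mathcal{P}^*$, $r^E_C$ is, in case (a), the minimizer of $\min\{\sum_{i\in C}r_i^2/w_i: r_C\in\mathscr{R}^*_{\mathrm{CO}}(C)\}$ and, in case (b), the minimizer of $\min\{\sum_{i\in C}r_i^2/w_i: r_C\in\mathscr{R}^*_{\mathrm{CO}}(C)\cap\mathbb{Q}_K^{|C|}\}$ (the egalitarian, respectively fractional egalitarian, solution of the subgame on $C$).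
   Context: Write $r(X)=\sum_{i\in X}r_i$ and $H(X\mid Y)=H(X\cup Y)-H(Y)$, where $H(X)$ is the entropy of $(Z_i:i\in X)$. The achievable region is $\mathscr{R}(V)=\{r_V\in\mathbb{R}^{|V|}: r(X)\ge H(X\mid V\setminus X)\ \forall X\subsetneq V\}$ and $R_{\mathrm{CO}}=\min\{r(V):r_V\in\mathscr{R}(V)\}$. For $\alpha\in\mathbb{R}$, $f_\alpha(\emptyset)=0$, $f_\alpha(X)=\alpha-H(V\setminus X\mid X)$ for $X\ne\emptyset$, and the Dilworth truncation is $\hat f_\alpha(X)=\min_{\mathcal{P}\in\Pi(X)}\sum_{C\in\mathcal{P}}f_\alpha(C)$ with $\Pi(X)$ the set of partitions of $X$. The fundamental partition $\mathcal{P}^*$ is the finest partition of $V$ attaining $\hat f_{R_{\mathrm{CO}}}(V)$. The core is $\mathscr{R}^*_{\mathrm{CO}}(V)=\{r_V\in\mathscr{R}(V): r(V)=R_{\mathrm{CO}}\}$, and for $C\subseteq V$, $\mathscr{R}^*_{\mathrm{CO}}(C)=\{r_C\in\mathbb{R}^{|C|}: r(X)\le\hat f_{R_{\mathrm{CO}}}(X)\ \forall X\subseteq C,\ r(C)=\hat f_{R_{\mathrm{CO}}}(C)\}$. The direct sum $\bigoplus_{C}r_C$ over a partition is the vector on $V$ whose $C$-coordinates are those of $r_C$. *)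

From HB Require Import structures.
From mathcomp Require Import all_boot all_order all_algebra.
From mathcomp Require Import reals exp.
Set Implicit Arguments. Unset Strict Implicit. Unset Printing Implicit Defensive.
Import Order.TTheory GRing.Theory Num.Theory.
Local Open Scope ring_scope.

Section Defs.
Context {R : realType} {V : finType} {A : V -> finType}.

(* joint pmf of the multiple source (Z_i : i in V), Z_i taking values in A i *)
Definition is_pmf (P : {dffun forall i : V, A i} -> R) :=
  (forall z, 0 <= P z) /\ \sum_z P z = 1.

(* H(X) = entropy of (Z_i : i in X), written as -sum_z P(z) ln P_X(z_X),
   where P_X(z_X) = sum of P(z') over z' agreeing with z on X (the marginal). *)
Definition entropy (P : {dffun forall i : V, A i} -> R) (X : {set V}) : R :=
  - \sum_(z : {dffun forall i : V, A i}) P z * ln (\sum_(z' : {dffun forall i : V, A i} | [forall i in X, z' i == z i]) P z').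
End Defs.

Section Defs2.
Context {R : realType} {V : finType}.
Implicit Types (H : {set V} -> R) (r w : V -> R) (X Y C : {set V}).

Definition condH H X Y := H (X :|: Y) - H Y.

Definition rsum r X := \sum_(i in X) r i.

Definition achievable H r :=
  forall X, X \proper [set: V] -> condH H X (~: X) <= rsum r X.

Definition is_RCO H (a : R) :=
  (exists r, achievable H r /\ rsum r [set: V] = a) /\
  (forall r, achievable H r -> a <= rsum r [set: V]).

Definition falpha H (a : R) X : R :=
  if X == set0 then 0 else a - condH H (~: X) X.

(* Dilworth truncation: min over partitions of X (the initial value
   falpha X is the value of the trivial partition, or 0 = value of the
   empty partition of the empty set, so it is attained). *)
Definition fhat H (a : R) X : R :=
  \big[Num.min/falpha H a X]_(P : {set {set V}} | partition P X)
     \sum_(C in P) falpha H a C.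

Definition refines (P Q : {set {set V}}) :=
  forall C, C \in P -> exists2 D, D \in Q & C \subset D.

Definition fundamental_partition H (a : R) (Pst : {set {set V}}) :=
  [/\ partition Pst [set: V],
      \sum_(C in Pst) falpha H a C = fhat H a [set: V] &
      forall Q : {set {set V}}, partition Q [set: V] ->
        \sum_(C in Q) falpha H a C = fhat H a [set: V] -> refines Pst Q].

Definition core H (a : R) r := achievable H r /\ rsum r [set: V] = a.

(* the subgame core R*_CO(C); only the coordinates of r in C matter *)
Definition subcore H (a : R) C r :=
  (forall X, X \subset C -> rsum r X <= fhat H a X) /\ rsum r C = fhat H a C.

Definition inQK (K : nat) (x : R) := exists z : int, x = z%:~R / K%:R.

Definition wnorm w C r := \sum_(i in C) r i ^+ 2 / w i.

Definition is_minimizer (feas : (V -> R) -> Prop) (obj : (V -> R) -> R) r :=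
  feas r /\ forall r', feas r' -> obj r <= obj r'.
End Defs2.

(* The joint entropy is submodular: by Gibbs' inequality [ln x <= x - 1],
   H(X) + H(Y) - H(X u Y) - H(X n Y) >= 1 - sum_z Q z, where
   Q z = P z P_X(z) P_Y(z) / (P_{X u Y}(z) P_{X n Y}(z)) has total mass at most 1.
   Hence f_alpha is submodular on intersecting pairs.  A vector r is in the core
   iff r(V) = R_CO and r(Z) <= f(Z) for all nonempty Z.  As the fundamental
   partition attains fhat(V) = R_CO, every core vector is tight on each block,
   r(C) = f(C) = fhat(C), so it lies in the subgame cores; conversely, a vector
   in all subgame cores satisfies every core inequality, by submodularity of f.
   So the core (and its trace on Q_K^V) is the product of the subgame cores, and
   a separable objective is minimised over a product iff it is minimised on each
   factor. *)

From HB Require Import structures.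
From mathcomp Require Import all_boot all_order all_algebra.
From mathcomp Require Import reals exp.
From mathcomp Require Import ring lra.
Import Order.TTheory GRing.Theory Num.Theory.
Local Open Scope ring_scope.
Set Implicit Arguments.
Unset Strict Implicit.
Unset Printing Implicit Defensive.

Lemma mulfV_le1 (R : numFieldType) (x : R) : x / x <= 1.
Proof. by have [->|x_neq0] := eqVneq x 0; rewrite ?mul0r ?ler01 ?divff. Qed.

Lemma ln_le_subr1 (R : realType) (x : R) : 0 < x -> ln x <= x - 1.
Proof.
move=> x_gt0; have := le_ln1Dx (x := x - 1).
by rewrite [1 + _]addrC subrK; apply; lra.
Qed.

Lemma eq_of_ler_sum (R : numDomainType) (I : finType) (P : pred I) (F G : I -> R) :
  (forall i, P i -> F i <= G i) ->
  \sum_(i | P i) F i = \sum_(i | P i) G i -> forall i, P i -> F i = G i.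
Proof.
move=> le_FG eq_sum i Pi.
have [_] := leif_sum (fun j Pj => leif_eq (le_FG j Pj)).
by rewrite eq_sum eqxx => /esym/forall_inP/(_ i Pi)/eqP.
Qed.

Lemma setC_neqT (T : finType) (A : {set T}) : (~: A != [set: T]) = (A != set0).
Proof. by rewrite -setC0 (inj_eq (@setC_inj _)). Qed.


Section Entropy.
Context {R : realType} {V : finType} {A : V -> finType}.
Local Notation T := {dffun forall i : V, A i}.
Variable P : T -> R.
Hypothesis P_ge0 : forall z, 0 <= P z.
Hypothesis P_sum1 : \sum_z P z = 1.
Implicit Types (S X Y : {set V}) (u v z : T).

Definition agree S z' z := [forall i in S, z' i == z i].

Definition marginal S z := \sum_(z' | agree S z' z) P z'.

Lemma entropyE S : entropy P S = - \sum_z P z * ln (marginal S z).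
Proof. by []. Qed.

Lemma agreeP S z' z : reflect (forall i, i \in S -> z' i = z i) (agree S z' z).
Proof. by apply: (iffP forall_inP) => eq_z i /eq_z => [/eqP|->]. Qed.

Lemma agree_refl S z : agree S z z.
Proof. exact/agreeP. Qed.

Lemma agree_sym S z z' : agree S z z' = agree S z' z.
Proof. by apply/agreeP/agreeP => eq_z i /eq_z ->. Qed.

Lemma agree_trans S z1 z2 z3 : agree S z1 z2 -> agree S z2 z3 -> agree S z1 z3.
Proof. by move=> /agreeP eq12 /agreeP eq23; apply/agreeP => i iS; rewrite eq12 ?eq23. Qed.

Lemma agree_eql S z1 z2 z : agree S z1 z2 -> agree S z1 z = agree S z2 z.
Proof.
move=> z12; apply/idP/idP => [z1z | z2z]; last exact: agree_trans z12 z2z.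
by rewrite agree_sym in z12; apply: agree_trans z12 z1z.
Qed.

Lemma agree_subset S S' z' z : S \subset S' -> agree S' z' z -> agree S z' z.
Proof. by move=> /subsetP sSS' /agreeP eq_z; apply/agreeP => i /sSS' /eq_z. Qed.

Lemma agree_setU X Y z' z : agree (X :|: Y) z' z = agree X z' z && agree Y z' z.
Proof.
apply/agreeP/andP => [eq_z | [/agreeP eqX /agreeP eqY] i].
  by split; apply/agreeP => i iS; rewrite eq_z // inE iS ?orbT.
by rewrite inE => /orP[/eqX | /eqY].
Qed.

Lemma pmf_le_marginal S z : P z <= marginal S z.
Proof. by rewrite /marginal (bigD1 z) ?agree_refl //= lerDl sumr_ge0. Qed.

Lemma marginal_ge0 S z : 0 <= marginal S z.
Proof. exact: le_trans (P_ge0 z) (pmf_le_marginal S z). Qed.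

Lemma eq_marginal S z z0 : agree S z z0 -> marginal S z = marginal S z0.
Proof.
move=> zz0; apply: eq_bigl => z'; apply/idP/idP => [z'z | z'z0].
  exact: agree_trans z'z zz0.
by rewrite agree_sym in zz0; apply: agree_trans z'z0 zz0.
Qed.

Section Submodularity.
Variables X Y : {set V}.
Local Notation U := (X :|: Y).
Local Notation I := (X :&: Y).

Let weight z := P z / (marginal U z * marginal I z).

(* The [z] agreeing with [u] on [X] and with [v] on [Y] form a single class of
   agreement on [X :|: Y], or none at all. *)
Lemma sum_weight_le u v :
  \sum_(z | agree X u z && agree Y v z) weight z
    <= (if agree I v u then (marginal I u)^-1 else 0).
Proof.
case: (pickP [pred z | agree X u z && agree Y v z]); last first.
  by move=> none; rewrite big_pred0 //; case: ifP; rewrite ?invr_ge0 ?marginal_ge0.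
move=> z0 /andP[uz0 vz0].
have vu : agree I v u.
  by apply/agreeP => i /setIP[iX iY]; rewrite (agreeP _ _ _ vz0) ?(agreeP _ _ _ uz0).
have class z : agree X u z && agree Y v z = agree U z z0.
  by rewrite agree_setU (agree_eql _ uz0) (agree_eql _ vz0) !(agree_sym _ z0).
have weightE z : agree U z z0 -> weight z = P z / (marginal U z0 * marginal I u).
  move=> zz0; rewrite /weight (eq_marginal zz0); congr (_ / (_ * _)).
  apply/eq_marginal/(agree_subset (subsetIl X Y)).
  rewrite agree_sym (agree_eql _ uz0) agree_sym.
  by move: zz0; rewrite agree_setU => /andP[].
rewrite vu (eq_bigl _ _ class) (eq_bigr _ weightE) -big_distrl /= -/(marginal U z0).
by rewrite invfM mulrA -[leRHS]mul1r ler_wpM2r ?invr_ge0 ?marginal_ge0 ?mulfV_le1.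
Qed.

Lemma sum_weighted_marginals_le1 :
  \sum_z marginal X z * marginal Y z * weight z <= 1.
Proof.
have expand z : marginal X z * marginal Y z * weight z =
    \sum_u \sum_v (if agree X u z && agree Y v z then P u * P v * weight z else 0).
  rewrite -mulrA /marginal big_mkcond big_distrl /=; apply: eq_bigr => u _.
  rewrite big_mkcond big_distrl big_distrr /=; apply: eq_bigr => v _.
  by case: (agree X u z); case: (agree Y v z); rewrite /= ?(mul0r, mulr0) ?mulrA.
rewrite (eq_bigr _ (fun z _ => expand z)) exchange_big /=.
apply: (@le_trans _ _ (\sum_u \sum_v P u * P v *
                         (if agree I v u then (marginal I u)^-1 else 0))).
  apply: ler_sum => u _; rewrite exchange_big /=; apply: ler_sum => v _.
  rewrite -big_mkcond -big_distrr /=.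
  by rewrite ler_wpM2l ?mulr_ge0 ?sum_weight_le.
rewrite -P_sum1; apply: ler_sum => u _.
have -> : \sum_v P u * P v * (if agree I v u then (marginal I u)^-1 else 0)
    = P u * (marginal I u / marginal I u).
  set m := (marginal I u)^-1.
  rewrite /marginal big_distrl big_distrr [RHS]big_mkcond /=.
  by apply: eq_bigr => v _; case: ifP; rewrite ?mulr0 ?mulrA.
by rewrite -[leRHS]mulr1 ler_wpM2l ?mulfV_le1.
Qed.

End Submodularity.

Lemma entropy_submod X Y :
  entropy P (X :|: Y) + entropy P (X :&: Y) <= entropy P X + entropy P Y.
Proof.
pose m S z := marginal S z.
pose ratio z := m X z * m Y z / (m (X :|: Y) z * m (X :&: Y) z).
have pointwise z :
    P z * (ln (m X z) + ln (m Y z) - ln (m (X :|: Y) z) - ln (m (X :&: Y) z))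
      <= m X z * m Y z * (P z / (m (X :|: Y) z * m (X :&: Y) z)) - P z.
  have [Pz0 | Pz_neq0] := eqVneq (P z) 0; first by rewrite Pz0 !(mul0r, mulr0) subr0.
  have Pz_gt0 : 0 < P z by rewrite lt_def Pz_neq0 P_ge0.
  have m_gt0 S : 0 < m S z := lt_le_trans Pz_gt0 (pmf_le_marginal S z).
  have -> : ln (m X z) + ln (m Y z) - ln (m (X :|: Y) z) - ln (m (X :&: Y) z)
      = ln (ratio z).
    by rewrite ln_div ?lnM ?posrE ?mulr_gt0 // opprD addrA.
  have -> : m X z * m Y z * (P z / (m (X :|: Y) z * m (X :&: Y) z)) - P z
      = P z * (ratio z - 1) by rewrite /ratio; ring.
  by rewrite ler_pM2l // ln_le_subr1 // divr_gt0 ?mulr_gt0.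
have total :
    \sum_z P z * (ln (m X z) + ln (m Y z) - ln (m (X :|: Y) z) - ln (m (X :&: Y) z))
      <= 0.
  apply: le_trans (ler_sum _ (fun z _ => pointwise z)) _.
  by rewrite sumrB P_sum1 subr_le0 sum_weighted_marginals_le1.
have split_sum :
    \sum_z P z * (ln (m X z) + ln (m Y z) - ln (m (X :|: Y) z) - ln (m (X :&: Y) z))
      = \sum_z P z * ln (m X z) + \sum_z P z * ln (m Y z)
        - \sum_z P z * ln (m (X :|: Y) z) - \sum_z P z * ln (m (X :&: Y) z).
  by rewrite -big_split -!sumrB; apply: eq_bigr => z _ /=; ring.
rewrite !entropyE; lra.
Qed.

End Entropy.

Section RankSums.
Context {R : realType} {V : finType}.
Implicit Types (r : V -> R) (X Y : {set V}).

Lemma rsum0 r : rsum r set0 = 0.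
Proof. exact: big_set0. Qed.

Lemma rsum_setT_compl r X : rsum r [set: V] = rsum r X + rsum r (~: X).
Proof. by rewrite /rsum (big_setID X) setTI setTD. Qed.

Lemma rsum_setUI r X Y : rsum r (X :|: Y) + rsum r (X :&: Y) = rsum r X + rsum r Y.
Proof.
rewrite /rsum (big_setID (A := X :|: Y) X) setUK setDUl setDv set0U.
by rewrite [\sum_(i in Y) _](big_setID X) setIC /=; lra.
Qed.

Lemma rsum_cover r (Q : {set {set V}}) :
  trivIset Q -> rsum r (cover Q) = \sum_(C in Q) rsum r C.
Proof. exact: big_trivIset. Qed.

End RankSums.

Section DilworthTruncation.
Context {R : realType} {V : finType}.
Variables (H : {set V} -> R) (a : R).
Implicit Types (r : V -> R) (X Y Z C : {set V}).
Local Notation f := (falpha H a).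

Lemma falphaE X : X != set0 -> f X = a - H [set: V] + H X.
Proof. by move=> X_neq0; rewrite /falpha (negbTE X_neq0) /condH setUC setUCr; lra. Qed.

Lemma falpha_setT : [set: V] != set0 -> f [set: V] = a.
Proof. by move=> V_neq0; rewrite falphaE //; lra. Qed.

Lemma coreP r :
  core H a r <-> rsum r [set: V] = a /\ forall Z, Z != set0 -> rsum r Z <= f Z.
Proof.
split=> [[achr rT] | [rT le_rf]]; split=> //.
  move=> Z Z_neq0; have [ZT | Z_neqT] := eqVneq Z [set: V].
    by move: Z_neq0; rewrite ZT => /falpha_setT ->; rewrite rT.
  have := achr (~: Z); rewrite properT setC_neqT setCK /condH setUC setUCr.
  move=> /(_ Z_neq0); rewrite falphaE //; have := rsum_setT_compl r Z; lra.
move=> X; rewrite properT => X_neqT; have [-> | X_neq0] := eqVneq X set0.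
  by rewrite rsum0 /condH setC0 set0U subrr.
have CX_neq0 : ~: X != set0 by rewrite -setC_neqT setCK.
have := le_rf _ CX_neq0; rewrite falphaE // /condH setUCr.
have := rsum_setT_compl r X; lra.
Qed.

Lemma fhat_le_falpha X : fhat H a X <= f X.
Proof. by rewrite /fhat; elim/big_rec: _ => // Q x _ le_xf; rewrite ge_min le_xf orbT. Qed.

Lemma rsum_le_fhat r X :
  (forall Z, Z != set0 -> Z \subset X -> rsum r Z <= f Z) -> rsum r X <= fhat H a X.
Proof.
move=> le_rf; rewrite /fhat; elim/big_rec: _ => [|Q x /and3P[/eqP covQ trivQ Q0] le_rx].
  by have [->|X_neq0] := eqVneq X set0; [rewrite rsum0 /falpha eqxx | exact: le_rf].
rewrite le_min le_rx andbT -covQ rsum_cover //; apply: ler_sum => C CQ.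
apply: le_rf; last by rewrite -covQ bigcup_sup.
by apply: contraNneq Q0 => <-.
Qed.

Lemma subcoreP r C :
  subcore H a C r <->
  (forall Z, Z != set0 -> Z \subset C -> rsum r Z <= f Z) /\ rsum r C = fhat H a C.
Proof.
split=> [[le_rfhat rC] | [le_rf rC]]; split=> //.
  move=> Z _ ZC; exact: le_trans (le_rfhat Z ZC) (fhat_le_falpha Z).
move=> X XC; apply: rsum_le_fhat => Z Z_neq0 ZX.
by apply: le_rf => //; apply: subset_trans ZX XC.
Qed.

Hypothesis H_submod : forall X Y, H (X :|: Y) + H (X :&: Y) <= H X + H Y.

Lemma falpha_submod X Y :
  X :&: Y != set0 -> f (X :|: Y) + f (X :&: Y) <= f X + f Y.
Proof.
move=> XY_neq0.
have X_neq0 : X != set0 by apply: contraNneq XY_neq0 => ->; rewrite set0I.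
have Y_neq0 : Y != set0 by apply: contraNneq XY_neq0 => ->; rewrite setI0.
have XUY_neq0 : X :|: Y != set0 by rewrite setU_eq0 negb_and X_neq0.
by rewrite !falphaE //; have := H_submod X Y; lra.
Qed.

End DilworthTruncation.

Section FundamentalPartition.
Context {R : realType} {V : finType}.
Variables (H : {set V} -> R) (a : R) (Pst : {set {set V}}).
Hypothesis H_submod : forall X Y, H (X :|: Y) + H (X :&: Y) <= H X + H Y.
Hypothesis V_neq0 : [set: V] != set0.
Hypothesis Pst_partition : partition Pst [set: V].
Hypothesis Pst_attains : \sum_(C in Pst) falpha H a C = fhat H a [set: V].
Variable r0 : V -> R.
Hypothesis r0_core : core H a r0.
Implicit Types (r : V -> R) (Y Z C : {set V}).
Local Notation f := (falpha H a).

Let cover_Pst : cover Pst = [set: V].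
Proof. by case/and3P: Pst_partition => /eqP. Qed.

Let trivIset_Pst : trivIset Pst.
Proof. by case/and3P: Pst_partition. Qed.

Let block_neq0 C : C \in Pst -> C != set0.
Proof. by case/and3P: Pst_partition => _ _ Pst0 CP; apply: contraNneq Pst0 => <-. Qed.

Lemma fhat_setT : fhat H a [set: V] = a.
Proof.
have [r0T le_r0f] := (coreP H a r0).1 r0_core.
apply/le_anti/andP; split.
  by rewrite -[leRHS](falpha_setT H a V_neq0) fhat_le_falpha.
by rewrite -[leLHS]r0T rsum_le_fhat // => Z Z_neq0 _; apply: le_r0f.
Qed.

Lemma core_rsum_block r : core H a r -> {in Pst, forall C, rsum r C = f C}.
Proof.
move=> /coreP[rT le_rf]; apply: eq_of_ler_sum => [C CP|]; first exact/le_rf/block_neq0.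
by rewrite -rsum_cover // cover_Pst rT Pst_attains fhat_setT.
Qed.

Lemma fhat_block : {in Pst, forall C, fhat H a C = f C}.
Proof.
move=> C CP; apply/le_anti/andP; split; first exact: fhat_le_falpha.
have [_ le_r0f] := (coreP H a r0).1 r0_core.
by rewrite -(core_rsum_block r0_core CP) rsum_le_fhat // => Z Z_neq0 _; apply: le_r0f.
Qed.

Lemma core_subcore r : core H a r -> {in Pst, forall C, subcore H a C r}.
Proof.
move=> cr C CP; apply/subcoreP; rewrite fhat_block // core_rsum_block //.
by split=> // Z Z_neq0 _; apply: ((coreP H a r).1 cr).2.
Qed.

Lemma cover_blocks_meeting Y :
  (forall C, C \in Pst -> C :&: Y != set0 -> C \subset Y) ->
  cover [set C in Pst | C :&: Y != set0] = Y.
Proof.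
move=> no_cross; apply/setP => x; apply/bigcupP/idP => [[C] | xY].
  by rewrite inE => /andP[CP /(no_cross C CP)/subsetP]; apply.
have : x \in cover Pst by rewrite cover_Pst inE.
case/bigcupP => C CP xC; exists C => //.
by rewrite inE CP; apply/set0Pn; exists x; rewrite inE xC.
Qed.

Lemma eq_rsum_cover r r' (J : {set {set V}}) :
  J \subset Pst -> {in J, forall C, rsum r C = rsum r' C} ->
  rsum r (cover J) = rsum r' (cover J).
Proof.
move=> JP eq_rr'; have trivJ := trivIsetS JP trivIset_Pst.
by rewrite !rsum_cover //; apply: eq_bigr.
Qed.

(* Induction on the complement of [Y]: absorbing a block [C] that [Y] meets
   without containing it loses nothing, by submodularity of [f] on the
   intersecting pair [Y, C] and tightness of [r] on [C]. *)
Lemma rsum_le_falpha_of_blocks r :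
  {in Pst, forall C, rsum r C = f C} ->
  (forall C Z, C \in Pst -> Z != set0 -> Z \subset C -> rsum r Z <= f Z) ->
  forall Y, Y != set0 -> rsum r Y <= f Y.
Proof.
move=> r_block le_rf Y; have [n] := ubnP #|~: Y|.
elim: n Y => // n IH Y ltYn Y_neq0.
case: (pickP [pred C in Pst | (C :&: Y != set0) && ~~ (C \subset Y)]).
  move=> C /and3P[CP CY_neq0 CnY].
  have YC_lt : (#|~: (Y :|: C)| < n)%N.
    have : ~: (Y :|: C) \proper ~: Y by rewrite properC properUl.
    by move=> /proper_card/leq_trans; apply.
  have YC_neq0 : Y :|: C != set0 by rewrite setU_eq0 negb_and Y_neq0.
  have := IH _ YC_lt YC_neq0; have := rsum_setUI r Y C; have := r_block C CP.
  have := le_rf C _ CP CY_neq0 (subsetIl C Y).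
  have := falpha_submod a H_submod (X := Y) (Y := C).
  rewrite [Y :&: C]setIC => /(_ CY_neq0).
  lra.
move=> no_cross.
have Y_blocks C : C \in Pst -> C :&: Y != set0 -> C \subset Y.
  by move=> CP CY; have := no_cross C; rewrite /= CP CY /= => /negbFE.
set J := [set C in Pst | C :&: Y != set0].
have JP : J \subset Pst by apply/subsetP => C; rewrite inE => /andP[].
have coverJ : cover J = Y := cover_blocks_meeting Y_blocks.
rewrite -coverJ (@eq_rsum_cover r r0) // => [|C /(subsetP JP) CP].
  by apply: ((coreP H a r0).1 r0_core).2; rewrite coverJ.
by rewrite r_block // core_rsum_block.
Qed.

Lemma subcore_core r : {in Pst, forall C, subcore H a C r} -> core H a r.
Proof.
move=> r_sub; have r_block C : C \in Pst -> rsum r C = f C.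
  by move=> CP; rewrite (r_sub C CP).2 fhat_block.
apply/coreP; split.
  by rewrite -cover_Pst rsum_cover // (eq_bigr _ r_block) Pst_attains fhat_setT.
apply: rsum_le_falpha_of_blocks => // C Z CP.
exact: ((subcoreP H a r C).1 (r_sub C CP)).1.
Qed.

Lemma core_iff_subcores r : core H a r <-> {in Pst, forall C, subcore H a C r}.
Proof. by split; [apply: core_subcore | apply: subcore_core]. Qed.

End FundamentalPartition.

Section SeparableMinimization.
Context {R : realType} {V : finType}.
Variables (Pst : {set {set V}}) (w : V -> R).
Hypothesis cover_Pst : cover Pst = [set: V].
Hypothesis trivIset_Pst : trivIset Pst.
Implicit Types (r : V -> R) (C D : {set V}) (feas : (V -> R) -> Prop).

Definition local_to C feas :=
  forall r r', {in C, forall i, r i = r' i} -> feas r -> feas r'.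

Lemma eq_wnorm C r r' : {in C, forall i, r i = r' i} -> wnorm w C r = wnorm w C r'.
Proof. by move=> eq_rr'; apply: eq_bigr => i /eq_rr' ->. Qed.

Lemma wnorm_partition r : wnorm w [set: V] r = \sum_(C in Pst) wnorm w C r.
Proof. by rewrite /wnorm -cover_Pst big_trivIset. Qed.

Definition patch C r' r i := if i \in C then r' i else r i.

Lemma patch_in C r' r : {in C, forall i, patch C r' r i = r' i}.
Proof. by move=> i iC; rewrite /patch iC. Qed.

Lemma patch_out C D r' r :
  D \in Pst -> C \in Pst -> D != C -> {in D, forall i, patch C r' r i = r i}.
Proof.
move=> DP CP DC i iD; rewrite /patch.
by have /disjointFr-> := trivIsetP trivIset_Pst D C DP CP DC.
Qed.

Variables (feasV : (V -> R) -> Prop) (feasC : {set V} -> (V -> R) -> Prop).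
Hypothesis feasV_blocks : forall r, feasV r <-> {in Pst, forall C, feasC C r}.
Hypothesis feasC_local : {in Pst, forall C, local_to C (feasC C)}.

Lemma is_minimizer_blocks r :
  is_minimizer feasV (wnorm w [set: V]) r <->
  {in Pst, forall C, is_minimizer (feasC C) (wnorm w C) r}.
Proof.
split=> [[feas_r min_r] C CP | min_r].
  split=> [|r' feas_r']; first exact: (feasV_blocks r).1.
  have feas_patch : feasV (patch C r' r).
    apply/feasV_blocks => D DP; have [-> | DC] := eqVneq D C.
      exact: feasC_local CP _ _ (fun i iC => esym (patch_in r' r iC)) feas_r'.
    have feas_D := (feasV_blocks r).1 feas_r D DP.
    exact: feasC_local DP _ _ (fun i iD => esym (patch_out r' r DP CP DC iD)) feas_D.
  have := min_r _ feas_patch; rewrite !wnorm_partition !(bigD1 C CP) /=.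
  have -> : \sum_(D in Pst | D != C) wnorm w D (patch C r' r)
             = \sum_(D in Pst | D != C) wnorm w D r.
    by apply: eq_bigr => D /andP[DP DC]; apply: eq_wnorm (patch_out r' r DP CP DC).
  by rewrite (eq_wnorm (patch_in r' r)) lerD2r.
split=> [|r' feas_r']; first by apply/feasV_blocks => C CP; case: (min_r C CP).
rewrite !wnorm_partition; apply: ler_sum => C CP.
exact: (min_r C CP).2 ((feasV_blocks r').1 feas_r' C CP).
Qed.

End SeparableMinimization.

Lemma subcore_local (R : realType) (V : finType) (H : {set V} -> R) (a : R) C :
  local_to C (subcore H a C).
Proof.
move=> r r' eq_rr'.
have eq_rsum (X : {set V}) : X \subset C -> rsum r X = rsum r' X.
  by move/subsetP=> XC; apply: eq_bigr => i /XC /eq_rr'.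
by case=> le_r rC; split=> [X XC|]; rewrite -eq_rsum ?le_r.
Qed.

Theorem theorem3 (R : realType) (V : finType) (A : V -> finType)
    (P : {dffun forall i : V, A i} -> R) (RCO : R) (Pst : {set {set V}})
    (w : V -> R) :
  (1 < #|V|)%N ->
  is_pmf P ->
  is_RCO (entropy P) RCO ->
  fundamental_partition (entropy P) RCO Pst ->
  (2 <= #|Pst|)%N ->
  (forall i, 0 < w i) ->
  (* (a) egalitarian solution *)
  (forall r : V -> R,
     is_minimizer (core (entropy P) RCO) (wnorm w [set: V]) r <->
     (forall C, C \in Pst ->
        is_minimizer (subcore (entropy P) RCO C) (wnorm w C) r)) /\
  (* (b) fractional egalitarian solution, K = |Pst| - 1 *)
  (forall r : V -> R,
     is_minimizer (fun r' => core (entropy P) RCO r' /\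
                             forall i, inQK (#|Pst| - 1) (r' i))
                  (wnorm w [set: V]) r <->
     (forall C, C \in Pst ->
        is_minimizer (fun r' => subcore (entropy P) RCO C r' /\
                                forall i, i \in C -> inQK (#|Pst| - 1) (r' i))
                     (wnorm w C) r)).
Proof.
move=> V_gt1 [P_ge0 P_sum1] [[r0 r0_core] _] [Pst_partition Pst_attains _] _ _.
have V_neq0 : [set: V] != set0 by rewrite -card_gt0 cardsT ltnW.
have [/eqP cover_Pst trivIset_Pst _] := and3P Pst_partition.
have core_blocks := core_iff_subcores (entropy_submod P_ge0 P_sum1) V_neq0
                      Pst_partition Pst_attains r0_core.
split=> r; apply: is_minimizer_blocks => //.
- by move=> C _; apply: subcore_local.
- move=> r'; split=> [[/core_blocks sub_r' QK_r'] C CP | blocks_r'].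
    by split=> [|i _]; [exact: sub_r' | exact: QK_r'].
  split; first by apply/core_blocks => C CP; case: (blocks_r' C CP).
  move=> i; have : i \in cover Pst by rewrite cover_Pst inE.
  by case/bigcupP => C CP iC; apply: (blocks_r' C CP).2.
- move=> C _ r1 r2 eq_r12 [sub_r1 QK_r1].
  split=> [|i iC]; first exact: subcore_local eq_r12 sub_r1.
  by rewrite -eq_r12 //; apply: QK_r1.
Qed.
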